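(* Under the standing assumptions described in the context (including (H4)–(H8)), the predictor–corrector method is consistent: for every partition satisfying (H4) with step $h$, $$\max_{0\le n\le N}\frac{|\tau_{n+1}|}{h}\le \tfrac12H^2h+\tfrac12K_2H^3h^2,$$ and consequently $\max_{0\le n\le N}|\tau_{n+1}|/h\to0$ as $h\to0$ (along partitions satisfying (H4) with the same constants $H,K_2$).
   Context: Let $T>0$ and let $g:[0,T]\to[0,\infty)$ be increasing, left-continuous, continuous at $0$, with a finite set $D_g\subset(0,T)$ of discontinuity points; $\Delta^+\varphi(t)=\varphi(t^+)-\varphi(t)$; $g^B(t)=\sum_{s\in[0,t)}\Delta^+g(s)$, $g^C=g-g^B$; $\mu_g$ is the Lebesgue–Stieltjes measure with $\mu_g([c,d))=g(d)-g(c)$. For $u:[0,T]\to\mathbb R$ the Stieltjes derivative at $t$ is $u'_g(t)=\lim_{s\to t}\frac{u(s)-u(t)}{g(s)-g(t)}$ if $t\notin D_g$ and $u'_g(t)=\frac{u(t^+)-u(t)}{\Delta^+g(t)}$ if $t\in D_g$. Let $f:[0,T]\times\mathbb R\to\mathbb R$, $x_0\in\mathbb R$, and let $x$ be the solution of $x'_g(t)=f(t,x(t))$ for $\mu_g$-a.e. $t\in[0,T)$, $x(0)=x_0$; it satisfies $x(t)=x_0+\int_{[0,t)}f(s,x(s))\,\mathrm d\mu_g(s)$ for all $t\in[0,T]$. Put $f_*(x)(t)=f(t,x(t))$, $f_*^B(x)(t)=\sum_{s\in[0,t)}\Delta^+f_*(x)(s)$, $f_*^C(x)=f_*(x)-f_*^B(x)$.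 A function $u$ is $g$-Lipschitz with constant $H$ if $|u(t)-u(s)|\le H|g(t)-g(s)|$ for all $t,s$; $g$-continuous means: for every $t_0$ and $\epsilon>0$ there is $\delta>0$ with $|g(t)-g(t_0)|<\delta\Rightarrow|u(t)-u(t_0)|<\epsilon$. Hypotheses: (H4) $0=t_0<t_1<\dots<t_{N+1}=T$ with $t_{k+1}-t_k=h>0$ for all $k$, and $D_g\subset\{t_k\}$; $K_1=\max\{\Delta^+g(d):d\in D_g\}$. (H5) $f_*(x)$ is $g$-Lipschitz with constant $H>0$, and $f_*^C(x)$ and $g^C$ are Lipschitz with constant $H$. (H6) for every $c\in\mathbb R$, $f(\cdot,c)$ is bounded and $g$-continuous on $[0,T]$. (H7) for every $t$, $f(t,\cdot)\in C^1(\mathbb R)$ and $|\partial_x f(t,x)|<K_2$ for all $(t,x)$. (H8) for every $t\in[0,T)$ and $c$, the right limit $f(t^+,c)=\lim_{s\to t^+}f(s,c)$ exists, $f(t^+,\cdot)\in C^1(\mathbb R)$ and $|\partial_x f(t^+,x)|<K_3$ for all $(t,x)$. Notation: $x_k=x(t_k)$, $x_k^+=x(t_k^+)$. For $k=0,\dots,N$: $x^*_{k+1}=x_k^++f(t_k^+,x_k^+)(g(t_{k+1})-g(t_k^+))$ and $\tau_{k+1}=x_{k+1}-x_k^+-\tfrac12(f(t_k^+,x_k^+)+f(t_{k+1},x^*_{k+1}))(g(t_{k+1})-g(t_k^+))$. *)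

From Stdlib Require Import Reals Lra List.
Open Scope R_scope.

Definition increasing_on (T : R) (g : R -> R) : Prop :=
  forall s t, 0 <= s -> s <= t -> t <= T -> g s <= g t.

Definition cont_in (T : R) (u : R -> R) (t : R) : Prop :=
  forall eps, 0 < eps -> exists del, 0 < del /\
    forall s, 0 <= s <= T -> Rabs (s - t) < del -> Rabs (u s - u t) < eps.

Definition left_cont_at (u : R -> R) (t : R) : Prop :=
  forall eps, 0 < eps -> exists del, 0 < del /\
    forall s, 0 <= s <= t -> t - s < del -> Rabs (u s - u t) < eps.

Definition rlim (T : R) (u : R -> R) (t l : R) : Prop :=
  forall eps, 0 < eps -> exists del, 0 < del /\
    forall s, t < s <= T -> s - t < del -> Rabs (u s - l) < eps.

(* sum_{d in Dg, d < t} (up d - u d), i.e. sum of the jumps Delta^+ u over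
   the (finite) set Dg intersected with [0,t) *)
Definition jump_sum (Dg : list R) (u up : R -> R) (t : R) : R :=
  fold_right (fun d acc => (if Rlt_dec d t then up d - u d else 0) + acc) 0 Dg.

Definition g_Lipschitz (T : R) (g u : R -> R) (H : R) : Prop :=
  forall s t, 0 <= s <= T -> 0 <= t <= T -> Rabs (u t - u s) <= H * Rabs (g t - g s).

Definition Lipschitz_on (T : R) (u : R -> R) (H : R) : Prop :=
  forall s t, 0 <= s <= T -> 0 <= t <= T -> Rabs (u t - u s) <= H * Rabs (t - s).

Definition g_cont (T : R) (g u : R -> R) : Prop :=
  forall t0, 0 <= t0 <= T -> forall eps, 0 < eps -> exists del, 0 < del /\
    forall t, 0 <= t <= T -> Rabs (g t - g t0) < del -> Rabs (u t - u t0) < eps.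

(* E is mu_g-null: Lebesgue-Stieltjes outer measure (covers by [c,d) in [0,T]) is 0 *)
Definition g_null (T : R) (g : R -> R) (E : R -> Prop) : Prop :=
  forall eps, 0 < eps -> exists c d : nat -> R,
    (forall n, 0 <= c n /\ c n <= d n /\ d n <= T) /\
    (forall t, E t -> exists n, c n <= t /\ t < d n) /\
    (forall N, sum_f_R0 (fun n => g (d n) - g (c n)) N <= eps).

(* finite families of pairwise disjoint open subintervals (a_i,b_i) of [0,T],
   listed in increasing order *)
Fixpoint nonoverlap (T : R) (l : list (R * R)) : Prop :=
  match l with
  | nil => True
  | (a, b) :: l' =>
      0 <= a /\ a <= b /\ b <= T /\
      (match l' with nil => True | (a', _) :: _ => b <= a' end) /\
      nonoverlap T l'
  end.

Definition sum_list (l : list R) : R := fold_right Rplus 0 l.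

Definition g_abs_cont (T : R) (g u : R -> R) : Prop :=
  forall eps, 0 < eps -> exists del, 0 < del /\
    forall l, nonoverlap T l ->
      sum_list (map (fun p => g (snd p) - g (fst p)) l) < del ->
      sum_list (map (fun p => Rabs (u (snd p) - u (fst p))) l) < eps.

Definition g_deriv (T : R) (g : R -> R) (Dg : list R) (u : R -> R) (t L : R) : Prop :=
  (In t Dg -> exists gl ul, rlim T g t gl /\ rlim T u t ul /\ L = (ul - u t) / (gl - g t)) /\
  (~ In t Dg -> forall eps, 0 < eps -> exists del, 0 < del /\
     forall s, 0 <= s <= T -> 0 < Rabs (s - t) < del -> g s <> g t ->
       Rabs ((u s - u t) / (g s - g t) - L) < eps).

Definition C1_bounded (phi : R -> R) (K : R) : Prop :=
  exists dphi : R -> R, (forall y, derivable_pt_lim phi y (dphi y)) /\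
    continuity dphi /\ (forall y, Rabs (dphi y) < K).

(* predictor x*_{k+1} and local truncation error tau_{k+1}, with a = t_k, b = t_{k+1};
   xp = x(.^+), gp = g(.^+), fplus = f(.^+, .) *)
Definition xstar (g : R -> R) (xp gp : R -> R) (fplus : R -> R -> R) (a b : R) : R :=
  xp a + fplus a (xp a) * (g b - gp a).

Definition tau (x g : R -> R) (f : R -> R -> R) (xp gp : R -> R) (fplus : R -> R -> R)
  (a b : R) : R :=
  x b - xp a
  - / 2 * (fplus a (xp a) + f b (xstar g xp gp fplus a b)) * (g b - gp a).

(* On a step (t_k, t_(k+1)] the jump sums are constant, so f_*(x) and g are H-Lipschitz
   there: f_*(x) stays within H (t - t_k) of f(t_k^+, x_k^+), and
   D := g(t_(k+1)) - g(t_k^+) <= H h.  A mean-value inequality for Stieltjes derivatives,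
   |y(b) - y(a^+)| <= M (g(b) - g(a^+)) whenever |y'_g| <= M mu_g-a.e. on (a, b), applied to
   y = x - c g, shows that x_(k+1) - x_k^+ is within (1/2) H h D of the trapezoid value and within
   H h D of the predictor increment; the K2-Lipschitz dependence of f on x turns the latter into
   the K2 H^3 h^3 term.  The mean-value inequality is proved by real induction: the exceptional
   mu_g-null set is covered by open intervals of small total g-length, across which
   g-absolute continuity keeps the variation of y small. *)

From Stdlib Require Import Reals List.
From Stdlib Require Import Lra Lia Classical IndefiniteDescription.
Open Scope R_scope.

Lemma Rabs_le_inv a b : Rabs a <= b -> -b <= a <= b.
Proof. unfold Rabs; destruct (Rcase_abs a); lra. Qed.

Lemma le_epsilon_scaled X Y K :
  0 <= K -> (forall e, 0 < e -> X <= Y + e * K) -> X <= Y.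
Proof.
  intros HK H. apply Rle_plus_epsilon. intros eps Heps.
  assert (Hq : 0 < eps / (K + 1)) by (apply Rdiv_lt_0_compat; lra).
  specialize (H _ Hq).
  replace (eps / (K + 1) * K) with (eps - eps / (K + 1)) in H by (field; lra).
  lra.
Qed.

Lemma real_induction (P : R -> Prop) s b :
  s <= b -> P s ->
  (forall t, s <= t <= b -> exists del, 0 < del /\
     forall u v, s <= u <= t -> t <= v <= b -> t - u < del -> v - t < del -> P u -> P v) ->
  P b.
Proof.
  intros Hsb Ps Hstep.
  set (S := fun t => s <= t <= b /\ P t).
  assert (Hbd : bound S) by (exists b; intros t [Ht _]; lra).
  destruct (completeness S Hbd (ex_intro _ s (conj (conj (Rle_refl s) Hsb) Ps)))
    as [ts [Hub Hlub]].
  assert (Hts1 : s <= ts) by (apply Hub; split; [lra | exact Ps]).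
  assert (Hts2 : ts <= b) by (apply Hlub; intros t [Ht _]; lra).
  destruct (Hstep ts (conj Hts1 Hts2)) as [del [Hdel Hst]].
  assert (Hu : exists u, S u /\ ts - del < u).
  { apply NNPP. intro Hn. assert (ts <= ts - del); [|lra].
    apply Hlub. intros u Su. apply Rnot_lt_le. intro Hlt. apply Hn. now exists u. }
  destruct Hu as [u [[Hu Pu] Hdu]].
  assert (Hut : u <= ts) by (apply Hub; split; auto).
  set (v := Rmin (ts + del / 2) b).
  assert (Hv : ts <= v <= b /\ v - ts < del) by (unfold v, Rmin; destruct Rle_dec; lra).
  assert (Pv : P v) by (apply (Hst u v); try lra; exact Pu).
  assert (Hvts : v <= ts) by (apply Hub; split; [lra | exact Pv]).
  replace b with v by (unfold v, Rmin in *; destruct Rle_dec; lra). exact Pv.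
Qed.

Definition g_length (g : R -> R) (L : list (R * R)) : R :=
  sum_list (map (fun p => g (snd p) - g (fst p)) L).

Definition variation (y : R -> R) (L : list (R * R)) : R :=
  sum_list (map (fun p => Rabs (y (snd p) - y (fst p))) L).

Lemma g_length_app g L L' : g_length g (L ++ L') = g_length g L + g_length g L'.
Proof. unfold g_length; rewrite map_app; induction L; simpl; lra. Qed.

Lemma variation_app y L L' : variation y (L ++ L') = variation y L + variation y L'.
Proof. unfold variation; rewrite map_app; induction L; simpl; lra. Qed.

Lemma nonoverlap_snoc T L u v :
  nonoverlap T L -> (forall p, In p L -> snd p <= u) -> 0 <= u -> u <= v -> v <= T ->
  nonoverlap T (L ++ (u, v) :: nil).
Proof.
  induction L as [|[a b] L IH]; intros HL Hsn Hu Huv Hv; simpl in *; [repeat split; lra|].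
  destruct HL as [Ha [Hab [HbT [Hnext HL]]]].
  repeat split; try lra.
  - destruct L as [|[a' b'] L']; simpl; [apply (Hsn (a, b)); auto | exact Hnext].
  - apply IH; auto.
Qed.

Lemma g_abs_cont_eq T g y z t :
  g_abs_cont T g y -> 0 <= z <= T -> 0 <= t <= T -> g z = g t -> y z = y t.
Proof.
  intros HAC.
  assert (key : forall z t, 0 <= z <= t -> t <= T -> g z = g t -> y z = y t).
  { intros z' t' Hz Ht Hg. apply NNPP. intro Hn.
    assert (Hp : 0 < Rabs (y t' - y z')) by (apply Rabs_pos_lt; lra).
    destruct (HAC _ Hp) as [del [Hdel Hl]].
    specialize (Hl ((z', t') :: nil)). simpl in Hl. rewrite Hg in Hl.
    assert (Hno : nonoverlap T ((z', t') :: nil)) by (simpl; repeat split; lra).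
    specialize (Hl Hno). lra. }
  intros Hz Ht Hg. destruct (Rle_dec z t).
  - apply key; lra.
  - symmetry; apply key; lra.
Qed.

Lemma g_length_nonneg T g L : increasing_on T g -> nonoverlap T L -> 0 <= g_length g L.
Proof.
  intros Hg. unfold g_length. induction L as [|[p q] L IH]; simpl; [lra|].
  intros [Hp [Hpq [HqT [_ HL]]]]. assert (g p <= g q) by (apply Hg; lra).
  specialize (IH HL). lra.
Qed.

Lemma variation_sub_scal_le T g x c L :
  increasing_on T g -> nonoverlap T L ->
  variation (fun t => x t - c * g t) L <= variation x L + Rabs c * g_length g L.
Proof.
  intros Hg. unfold variation, g_length.
  induction L as [|[p q] L IH]; simpl; [lra|]. intros [Hp [Hpq [HqT [_ HL]]]].
  specialize (IH HL).
  assert (Hgpq : g p <= g q) by (apply Hg; lra).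
  assert (Hterm : Rabs (x q - c * g q - (x p - c * g p))
                  <= Rabs (x q - x p) + Rabs c * (g q - g p)).
  { replace (x q - c * g q - (x p - c * g p)) with ((x q - x p) + - (c * (g q - g p))) by ring.
    rewrite <- (Rabs_pos_eq (g q - g p)) at 2 by lra.
    rewrite <- Rabs_mult, <- (Rabs_Ropp (c * _)). apply Rabs_triang. }
  lra.
Qed.

Lemma g_abs_cont_sub_scal T g x c :
  increasing_on T g -> g_abs_cont T g x -> g_abs_cont T g (fun t => x t - c * g t).
Proof.
  intros Hg HAC e He.
  destruct (HAC (e / 2) ltac:(lra)) as [del [Hdel Hx]].
  assert (Hc : 0 < Rabs c + 1) by (pose proof (Rabs_pos c); lra).
  exists (Rmin del (e / (2 * (Rabs c + 1)))).
  split; [apply Rmin_pos; [lra | apply Rdiv_lt_0_compat; lra]|].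
  intros L HL Hlen.
  change (variation (fun t => x t - c * g t) L < e).
  change (g_length g L < Rmin del (e / (2 * (Rabs c + 1)))) in Hlen.
  pose proof (Rmin_l del (e / (2 * (Rabs c + 1)))).
  pose proof (Rmin_r del (e / (2 * (Rabs c + 1)))).
  assert (HxL : variation x L < e / 2) by (apply Hx; [exact HL | fold (g_length g L); lra]).
  assert (HcL : Rabs c * g_length g L <= e / 2).
  { apply Rle_trans with ((Rabs c + 1) * (e / (2 * (Rabs c + 1)))); [|right; field; lra].
    pose proof (Rabs_pos c).
    pose proof (g_length_nonneg T g L Hg HL). nra. }
  pose proof (variation_sub_scal_le T g x c L Hg HL). lra.
Qed.

Lemma rlim_common_point T u v a b l m e :
  rlim T u a l -> rlim T v a m -> a < b -> b <= T -> 0 < e ->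
  exists s, a < s < b /\ Rabs (u s - l) < e /\ Rabs (v s - m) < e.
Proof.
  intros Hu Hv Hab HbT He.
  destruct (Hu e He) as [d1 [Hd1 Hu']]. destruct (Hv e He) as [d2 [Hd2 Hv']].
  set (s := a + Rmin (Rmin d1 d2) (b - a) / 2).
  assert (Hm := Rmin_pos (Rmin d1 d2) (b - a) (Rmin_pos d1 d2 Hd1 Hd2) ltac:(lra)).
  pose proof (Rmin_l (Rmin d1 d2) (b - a)). pose proof (Rmin_r (Rmin d1 d2) (b - a)).
  pose proof (Rmin_l d1 d2). pose proof (Rmin_r d1 d2).
  exists s. repeat split; [unfold s; lra | unfold s; lra | apply Hu' | apply Hv'];
    unfold s; lra.
Qed.

Lemma rlim_between T u a b l lo hi :
  a < b -> b <= T -> rlim T u a l -> (forall s, a < s <= b -> lo <= u s <= hi) ->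
  lo <= l <= hi.
Proof.
  intros Hab HbT Hu Hbnd.
  assert (Hnear : forall e, 0 < e -> lo <= l + e * 1 /\ l <= hi + e * 1).
  { intros e He. destruct (rlim_common_point T u u a b l l e Hu Hu Hab HbT He) as [s [Hs [Hus _]]].
    apply Rabs_def2 in Hus. pose proof (Hbnd s ltac:(lra)). lra. }
  split; apply le_epsilon_scaled with 1; try lra; intros e He; apply (Hnear e He).
Qed.

Lemma rlim_lipschitz_bound T u a b l H t :
  0 <= H -> b <= T -> rlim T u a l ->
  (forall s s', a < s <= b -> a < s' <= b -> Rabs (u s' - u s) <= H * Rabs (s' - s)) ->
  a < t <= b -> Rabs (u t - l) <= H * (t - a).
Proof.
  intros HH HbT Hu Hlip Ht.
  assert (Hl : u t - H * (t - a) <= l <= u t + H * (t - a)).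
  { apply (rlim_between T u a t); try lra; [exact Hu|]. intros s Hs.
    pose proof (Hlip s t ltac:(lra) ltac:(lra)) as Hst.
    rewrite (Rabs_pos_eq (t - s)) in Hst by lra. apply Rabs_le_inv in Hst.
    assert (H * (t - s) <= H * (t - a)) by nra. lra. }
  apply Rabs_le. lra.
Qed.

Lemma rlim_sub_scal T u v a l m c :
  rlim T u a l -> rlim T v a m -> rlim T (fun t => u t - c * v t) a (l - c * m).
Proof.
  intros Hu Hv e He.
  assert (Hc : 0 < Rabs c + 1) by (pose proof (Rabs_pos c); lra).
  destruct (Hu (e / 2) ltac:(lra)) as [d1 [Hd1 Hu']].
  destruct (Hv (e / (2 * (Rabs c + 1)))) as [d2 [Hd2 Hv']]; [apply Rdiv_lt_0_compat; lra|].
  exists (Rmin d1 d2). split; [now apply Rmin_pos|].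
  intros s Hs Hsd. pose proof (Rmin_l d1 d2). pose proof (Rmin_r d1 d2).
  specialize (Hu' s Hs ltac:(lra)).
  assert (Hcv : Rabs c * Rabs (v s - m) <= e / 2).
  { specialize (Hv' s Hs ltac:(lra)). pose proof (Rabs_pos c). pose proof (Rabs_pos (v s - m)).
    apply Rle_trans with ((Rabs c + 1) * (e / (2 * (Rabs c + 1)))); [nra | right; field; lra]. }
  replace (u s - c * v s - (l - c * m)) with ((u s - l) + - (c * (v s - m))) by ring.
  eapply Rle_lt_trans; [apply Rabs_triang|]. rewrite Rabs_Ropp, Rabs_mult. lra.
Qed.

Lemma rlim_compose_lipschitz T (f : R -> R -> R) x a xa fa K :
  0 <= K -> rlim T x a xa -> rlim T (fun s => f s xa) a fa ->
  (forall s y z, a < s <= T -> Rabs (f s y - f s z) <= K * Rabs (y - z)) ->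
  rlim T (fun s => f s (x s)) a fa.
Proof.
  intros HK Hx Hf Hlip e He.
  destruct (Hx (e / (2 * (K + 1)))) as [d1 [Hd1 Hx']]; [apply Rdiv_lt_0_compat; lra|].
  destruct (Hf (e / 2) ltac:(lra)) as [d2 [Hd2 Hf']].
  exists (Rmin d1 d2). split; [now apply Rmin_pos|].
  intros s Hs Hsd. pose proof (Rmin_l d1 d2). pose proof (Rmin_r d1 d2).
  specialize (Hf' s Hs ltac:(lra)).
  pose proof (Hlip s (x s) xa Hs) as Hl.
  assert (Hkx : K * Rabs (x s - xa) <= e / 2).
  { specialize (Hx' s Hs ltac:(lra)). pose proof (Rabs_pos (x s - xa)).
    apply Rle_trans with ((K + 1) * (e / (2 * (K + 1)))); [nra | right; field; lra]. }
  replace (f s (x s) - fa) with ((f s (x s) - f s xa) + (f s xa - fa)) by ring.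
  eapply Rle_lt_trans; [apply Rabs_triang|]. lra.
Qed.

Lemma jump_sum_const Dg u up a b t t' :
  (forall d, In d Dg -> ~ (a < d < b)) -> a < t <= b -> a < t' <= b ->
  jump_sum Dg u up t = jump_sum Dg u up t'.
Proof.
  intros Hd Ht Ht'. induction Dg as [|d Dg IH]; simpl; auto.
  rewrite IH by (intros; apply Hd; right; auto).
  assert (Hd0 := Hd d (or_introl eq_refl)).
  destruct (Rlt_dec d t); destruct (Rlt_dec d t'); auto; exfalso; apply Hd0; lra.
Qed.

Lemma lipschitz_between_jumps T Dg u up H a b :
  0 <= a -> b <= T -> (forall d, In d Dg -> ~ (a < d < b)) ->
  Lipschitz_on T (fun t => u t - jump_sum Dg u up t) H ->
  forall t t', a < t <= b -> a < t' <= b -> Rabs (u t' - u t) <= H * Rabs (t' - t).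
Proof.
  intros Ha HbT Hd Hlip t t' Ht Ht'.
  pose proof (Hlip t t' ltac:(lra) ltac:(lra)) as L. simpl in L.
  rewrite (jump_sum_const Dg u up a b t' t Hd Ht' Ht) in L.
  replace (u t' - jump_sum Dg u up t - (u t - jump_sum Dg u up t)) with (u t' - u t) in L
    by ring.
  exact L.
Qed.

(** * Covering a mu_g-null set *)

Lemma sum_f_R0_term_le (a : nat -> R) n N :
  (forall k, 0 <= a k) -> (n <= N)%nat -> a n <= sum_f_R0 a N.
Proof.
  intros Ha HnN. induction HnN as [|N HnN IH].
  - destruct n; simpl; [lra|]. pose proof (cond_pos_sum a n Ha). lra.
  - simpl. pose proof (Ha (S N)). lra.
Qed.

Lemma sum_f_R0_mono (a : nat -> R) N N' :
  (forall k, 0 <= a k) -> (N <= N')%nat -> sum_f_R0 a N <= sum_f_R0 a N'.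
Proof.
  intros Ha HN. induction HN as [|N' HN IH]; simpl; [lra|]. pose proof (Ha (S N')). lra.
Qed.

Lemma sum_half_powers_le N : sum_f_R0 (fun n => (/ 2) ^ n) N <= 2.
Proof. pose proof (GP_finite (/ 2) N). pose proof (pow_lt (/ 2) (N + 1) ltac:(lra)). lra. Qed.

Definition window_mass (g : R -> R) (c d t : R) : R := g (Rmax c (Rmin t d)) - g c.

(* The g-mass, with multiplicity, of the parts below [t] of the windows (cc n, dd n), n <= N. *)
Definition cover_mass (g : R -> R) (cc dd : nat -> R) (N : nat) (t : R) : R :=
  sum_f_R0 (fun n => window_mass g (cc n) (dd n) t) N.

Section CoverMass.

Variables (T : R) (g : R -> R) (cc dd : nat -> R).
Hypothesis Hg : increasing_on T g.
Hypothesis Hcd : forall n, 0 <= cc n <= dd n /\ dd n <= T.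

Lemma window_mass_bounds n t :
  0 <= window_mass g (cc n) (dd n) t <= g (dd n) - g (cc n).
Proof.
  destruct (Hcd n). unfold window_mass.
  assert (g (cc n) <= g (Rmax (cc n) (Rmin t (dd n))) <= g (dd n)); [|lra].
  split; apply Hg; unfold Rmax, Rmin; repeat destruct Rle_dec; lra.
Qed.

Lemma window_mass_inside n u v :
  cc n < u <= v -> v < dd n ->
  window_mass g (cc n) (dd n) v - window_mass g (cc n) (dd n) u = g v - g u.
Proof.
  intros Hu Hv. unfold window_mass.
  replace (Rmax (cc n) (Rmin v (dd n))) with v by (unfold Rmax, Rmin; repeat destruct Rle_dec; lra).
  replace (Rmax (cc n) (Rmin u (dd n))) with u by (unfold Rmax, Rmin; repeat destruct Rle_dec; lra).
  ring.
Qed.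

Lemma cover_mass_incr N u v :
  cover_mass g cc dd N v - cover_mass g cc dd N u =
  sum_f_R0 (fun n => window_mass g (cc n) (dd n) v - window_mass g (cc n) (dd n) u) N.
Proof. unfold cover_mass. now rewrite minus_sum. Qed.

Lemma window_mass_incr_nonneg u v n :
  u <= v -> 0 <= window_mass g (cc n) (dd n) v - window_mass g (cc n) (dd n) u.
Proof.
  intros Huv. destruct (Hcd n). unfold window_mass.
  enough (g (Rmax (cc n) (Rmin u (dd n))) <= g (Rmax (cc n) (Rmin v (dd n)))) by lra.
  apply Hg; unfold Rmax, Rmin; repeat destruct Rle_dec; lra.
Qed.

Lemma cover_mass_incr_nonneg N u v :
  u <= v -> 0 <= cover_mass g cc dd N v - cover_mass g cc dd N u.
Proof.
  intros Huv. rewrite cover_mass_incr. apply cond_pos_sum. intro n.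
  now apply window_mass_incr_nonneg.
Qed.

Lemma cover_mass_incr_mono N N' u v :
  u <= v -> (N <= N')%nat ->
  cover_mass g cc dd N v - cover_mass g cc dd N u
  <= cover_mass g cc dd N' v - cover_mass g cc dd N' u.
Proof.
  intros Huv HN. rewrite !cover_mass_incr. apply sum_f_R0_mono; [|exact HN].
  intro n. now apply window_mass_incr_nonneg.
Qed.

Lemma cover_mass_incr_window N n u v :
  (n <= N)%nat -> cc n < u <= v -> v < dd n ->
  g v - g u <= cover_mass g cc dd N v - cover_mass g cc dd N u.
Proof.
  intros HnN Hu Hv. rewrite <- (window_mass_inside n u v Hu Hv), cover_mass_incr.
  apply (sum_f_R0_term_le (fun k => window_mass g (cc k) (dd k) v - window_mass g (cc k) (dd k) u));
    [|exact HnN].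
  intro k. apply window_mass_incr_nonneg. lra.
Qed.

Lemma cover_mass_bounds N t :
  0 <= cover_mass g cc dd N t <= sum_f_R0 (fun n => g (dd n) - g (cc n)) N.
Proof.
  split; [apply cond_pos_sum | apply sum_Rle]; intros n; [|intros _];
    apply window_mass_bounds.
Qed.

End CoverMass.

Lemma g_null_open_cover T g E eta :
  (forall t, 0 < t <= T -> left_cont_at g t) -> g_null T g E -> 0 < eta ->
  exists cc dd : nat -> R, (forall n, 0 <= cc n <= dd n /\ dd n <= T) /\
    (forall t, 0 < t -> E t -> exists n, cc n < t < dd n) /\
    (forall N, sum_f_R0 (fun n => g (dd n) - g (cc n)) N <= eta).
Proof.
  intros Hlc Hnull Heta.
  destruct (Hnull (eta / 2) ltac:(lra)) as [c0 [dd [Hcd0 [Hcov0 Hsum0]]]].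
  (* Left continuity opens each window [c0 n, dd n) to the left at g-cost eta/4 * 2^-n. *)
  assert (Hshift : forall n, exists c, 0 <= c <= c0 n /\ (0 < c0 n -> c < c0 n) /\
                     g (c0 n) - g c <= eta / 4 * (/ 2) ^ n).
  { intro n. destruct (Hcd0 n) as [Hc0 [Hcd HdT]].
    assert (Hw : 0 < eta / 4 * (/ 2) ^ n) by (pose proof (pow_lt (/ 2) n ltac:(lra)); nra).
    destruct (Rlt_dec 0 (c0 n)) as [Hpos|Hzero].
    - destruct (Hlc (c0 n) ltac:(lra) _ Hw) as [del [Hdel Hd]].
      set (c := Rmax 0 (c0 n - del / 2)).
      assert (Hc : 0 <= c < c0 n /\ c0 n - c < del) by (unfold c, Rmax; destruct Rle_dec; lra).
      exists c. specialize (Hd c ltac:(lra) ltac:(lra)). apply Rabs_def2 in Hd.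
      repeat split; lra.
    - exists (c0 n). repeat split; lra. }
  destruct (functional_choice _ Hshift) as [cc Hcc].
  exists cc, dd. split; [|split].
  - intro n. destruct (Hcc n) as [Hc _]. destruct (Hcd0 n). lra.
  - intros t Ht HE. destruct (Hcov0 t HE) as [n [Hn1 Hn2]]. exists n.
    destruct (Hcc n) as [Hc1 [Hc2 _]]. destruct (Rlt_dec (c0 n) t); [lra|].
    assert (c0 n = t) by lra. subst t. split; [apply Hc2|]; lra.
  - intro N.
    assert (Hsplit : sum_f_R0 (fun n => g (dd n) - g (cc n)) N <=
              sum_f_R0 (fun n => g (dd n) - g (c0 n)) N
              + eta / 4 * sum_f_R0 (fun n => (/ 2) ^ n) N).
    { rewrite scal_sum, <- plus_sum. apply sum_Rle. intros n _.
      destruct (Hcc n) as [_ [_ Hn]]. lra. }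
    pose proof (Hsum0 N). pose proof (sum_half_powers_le N). nra.
Qed.

(** * A mean-value inequality for Stieltjes derivatives *)

Definition g_slope_le (T : R) (g y : R -> R) (M t : R) : Prop :=
  forall e, 0 < e -> exists del, 0 < del /\
    forall z, 0 <= z <= T -> Rabs (z - t) < del -> Rabs (y z - y t) <= (M + e) * Rabs (g z - g t).

(* [L] lists the intervals used to cross points of the exceptional set: their g-length is
   charged to the cover, and across them [y] is controlled only through its variation. *)
Definition covered_increment (T : R) (g y : R -> R) (cc dd : nat -> R) (K s t : R) : Prop :=
  exists L N, (forall p, In p L -> snd p <= t) /\ nonoverlap T L /\
    g_length g L <= cover_mass g cc dd N t - cover_mass g cc dd N s /\
    Rabs (y t - y s) <= K * (g t - g s) + variation y L.

Section CoveredIncrement.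

Variables (T : R) (g y : R -> R) (cc dd : nat -> R) (K s : R).
Hypothesis Hg : increasing_on T g.
Hypothesis Hcd : forall n, 0 <= cc n <= dd n /\ dd n <= T.
Hypothesis HK : 0 <= K.
Hypothesis Hs : 0 <= s.

Lemma covered_increment_refl : covered_increment T g y cc dd K s s.
Proof.
  exists nil, 0%nat. unfold g_length, variation. simpl.
  rewrite !Rminus_diag, Rabs_R0. repeat split; try lra; contradiction.
Qed.

Lemma covered_increment_window n u v :
  s <= u <= v -> v <= T -> cc n < u -> v < dd n ->
  covered_increment T g y cc dd K s u -> covered_increment T g y cc dd K s v.
Proof.
  intros Huv HvT Hcu Hvd [L [N [Hsnd [Hno [Hlen Hy]]]]].
  assert (Hgsu : g s <= g u) by (apply Hg; lra).
  assert (Hguv : g u <= g v) by (apply Hg; lra).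
  exists (L ++ (u, v) :: nil), (Nat.max N n). split; [|split; [|split]].
  - intros p Hp. apply in_app_or in Hp. destruct Hp as [Hp | [<- | []]]; simpl; [|lra].
    specialize (Hsnd p Hp). lra.
  - apply nonoverlap_snoc; auto; lra.
  - rewrite g_length_app. unfold g_length at 2. simpl.
    pose proof (cover_mass_incr_mono T g cc dd Hg Hcd N (Nat.max N n) s u
                  ltac:(lra) (Nat.le_max_l N n)).
    pose proof (cover_mass_incr_window T g cc dd Hg Hcd (Nat.max N n) n u v
                  (Nat.le_max_r N n) ltac:(lra) Hvd).
    lra.
  - rewrite variation_app. unfold variation at 2. simpl.
    pose proof (Rabs_triang (y u - y s) (y v - y u)) as Htri.
    replace (y u - y s + (y v - y u)) with (y v - y s) in Htri by ring.
    assert (K * (g u - g s) <= K * (g v - g s)) by nra.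
    lra.
Qed.

Lemma covered_increment_slope t del u v :
  (forall z, 0 <= z <= T -> Rabs (z - t) < del -> Rabs (y z - y t) <= K * Rabs (g z - g t)) ->
  s <= u <= t -> t <= v <= T -> t - u < del -> v - t < del ->
  covered_increment T g y cc dd K s u -> covered_increment T g y cc dd K s v.
Proof.
  intros Hslope Hu Hv Hdu Hdv [L [N [Hsnd [Hno [Hlen Hy]]]]].
  assert (Hgsu : g s <= g u) by (apply Hg; lra).
  assert (Hgut : g u <= g t) by (apply Hg; lra).
  assert (Hgtv : g t <= g v) by (apply Hg; lra).
  exists L, N. split; [|split; [|split]]; auto.
  - intros p Hp. specialize (Hsnd p Hp). lra.
  - pose proof (cover_mass_incr_nonneg T g cc dd Hg Hcd N u v ltac:(lra)). lra.
  - assert (Hyu := Hslope u ltac:(lra) ltac:(apply Rabs_def1; lra)).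
    assert (Hyv := Hslope v ltac:(lra) ltac:(apply Rabs_def1; lra)).
    rewrite (Rabs_left1 (g u - g t)), Ropp_minus_distr in Hyu by lra.
    rewrite (Rabs_pos_eq (g v - g t)) in Hyv by lra.
    rewrite Rabs_minus_sym in Hyu.
    pose proof (Rabs_triang (y u - y s) (y t - y u)) as Htri1.
    pose proof (Rabs_triang (y u - y s + (y t - y u)) (y v - y t)) as Htri2.
    replace (y u - y s + (y t - y u) + (y v - y t)) with (y v - y s) in Htri2 by ring.
    lra.
Qed.

Lemma covered_increment_through E b :
  s <= b -> b <= T ->
  (forall t, s <= t <= b -> E t -> exists n, cc n < t < dd n) ->
  (forall t, s <= t <= b -> ~ E t -> exists del, 0 < del /\
     forall z, 0 <= z <= T -> Rabs (z - t) < del -> Rabs (y z - y t) <= K * Rabs (g z - g t)) ->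
  covered_increment T g y cc dd K s b.
Proof.
  intros Hsb HbT Hcov Hslope.
  apply (real_induction (covered_increment T g y cc dd K s) s b);
    [exact Hsb | exact covered_increment_refl |].
  intros t Ht. destruct (classic (E t)) as [HE | HnE].
  - destruct (Hcov t Ht HE) as [n Hn].
    exists (Rmin (t - cc n) (dd n - t)). split; [apply Rmin_pos; lra|].
    intros u v Hu Hv Hdu Hdv.
    pose proof (Rmin_l (t - cc n) (dd n - t)). pose proof (Rmin_r (t - cc n) (dd n - t)).
    apply (covered_increment_window n); lra.
  - destruct (Hslope t Ht HnE) as [del [Hdel Hd]]. exists del. split; [exact Hdel|].
    intros u v Hu Hv. apply (covered_increment_slope t del); auto; lra.
Qed.

End CoveredIncrement.

Lemma g_mean_value_ineq T g y E s b M :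
  0 < s -> s <= b -> b <= T -> increasing_on T g ->
  (forall t, 0 < t <= T -> left_cont_at g t) -> g_abs_cont T g y -> g_null T g E -> 0 <= M ->
  (forall t, s <= t <= b -> ~ E t -> g_slope_le T g y M t) ->
  Rabs (y b - y s) <= M * (g b - g s).
Proof.
  intros Hs Hsb HbT Hg Hlc HAC Hnull HM Hslope.
  assert (Hgsb : g s <= g b) by (apply Hg; lra).
  apply le_epsilon_scaled with (K := g b - g s + 1); [lra|]. intros e He.
  destruct (HAC e He) as [dA [HdA HvarL]].
  destruct (g_null_open_cover T g E (dA / 2) Hlc Hnull ltac:(lra)) as [cc [dd [Hcd [Hcov Hsum]]]].
  destruct (covered_increment_through T g y cc dd (M + e) s Hg Hcd ltac:(lra) ltac:(lra)
              E b Hsb HbT)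
    as [L [N [_ [Hno [Hlen Hy]]]]].
  - intros t Ht HE. apply Hcov; [lra | exact HE].
  - intros t Ht HnE. exact (Hslope t Ht HnE e He).
  - assert (Hvar : variation y L < e).
    { apply HvarL; [exact Hno|]. fold (g_length g L).
      pose proof (cover_mass_bounds T g cc dd Hg Hcd N s) as Hs0.
      pose proof (cover_mass_bounds T g cc dd Hg Hcd N b) as Hb0.
      pose proof (Hsum N). lra. }
    lra.
Qed.

Lemma g_mean_value_ineq_rlim T g y E a b ya ga M :
  0 <= a -> a < b -> b <= T -> increasing_on T g ->
  (forall t, 0 < t <= T -> left_cont_at g t) -> g_abs_cont T g y -> g_null T g E -> 0 <= M ->
  (forall t, a < t < b -> ~ E t -> g_slope_le T g y M t) ->
  rlim T y a ya -> rlim T g a ga ->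
  Rabs (y b - ya) <= M * (g b - ga).
Proof.
  intros Ha Hab HbT Hg Hlc HAC Hnull HM Hslope Hy Hga.
  apply le_epsilon_scaled with (K := 2 + M); [lra|]. intros e He.
  destruct (HAC e He) as [dA [HdA HvarL]].
  destruct (Hlc b ltac:(lra) dA HdA) as [del [Hdel Hgb]].
  set (b' := b - Rmin del (b - a) / 2).
  assert (Hb' : a < b' < b /\ b - b' < del).
  { pose proof (Rmin_pos del (b - a) Hdel ltac:(lra)).
    pose proof (Rmin_l del (b - a)). pose proof (Rmin_r del (b - a)). unfold b'. lra. }
  assert (Hgb'b : g b' <= g b) by (apply Hg; lra).
  assert (Hyb : Rabs (y b - y b') < e).
  { specialize (Hgb b' ltac:(lra) ltac:(lra)). apply Rabs_def2 in Hgb.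
    specialize (HvarL ((b', b) :: nil)). simpl in HvarL.
    enough (Rabs (y b - y b') + 0 < e) by lra.
    apply HvarL; [simpl; repeat split; lra | lra]. }
  destruct (rlim_common_point T y g a b' ya ga e Hy Hga ltac:(lra) ltac:(lra) He)
    as [s [Hs [Hys Hgs]]].
  apply Rabs_def2 in Hgs.
  assert (Hmv : Rabs (y b' - y s) <= M * (g b' - g s)).
  { apply (g_mean_value_ineq T g y E); auto; try lra.
    intros t Ht. apply Hslope. lra. }
  assert (M * (g b' - g s) <= M * (g b - ga) + e * M) by nra.
  replace (y b - ya) with ((y b - y b') + (y b' - y s) + (y s - ya)) by ring.
  pose proof (Rabs_triang (y b - y b' + (y b' - y s)) (y s - ya)).
  pose proof (Rabs_triang (y b - y b') (y b' - y s)).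
  lra.
Qed.

Lemma g_slope_le_of_quotient T g x t F c M :
  g_abs_cont T g x -> 0 <= t <= T -> Rabs (F - c) <= M ->
  (forall eps, 0 < eps -> exists del, 0 < del /\
     forall z, 0 <= z <= T -> 0 < Rabs (z - t) < del -> g z <> g t ->
       Rabs ((x z - x t) / (g z - g t) - F) < eps) ->
  g_slope_le T g (fun z => x z - c * g z) M t.
Proof.
  intros HAC Ht HFc Hq e He.
  destruct (Hq e He) as [del [Hdel Hd]]. exists del. split; [exact Hdel|].
  intros z Hz Hzt.
  destruct (Req_dec (g z) (g t)) as [Heq | Hne].
  - rewrite (g_abs_cont_eq T g x z t HAC Hz Ht Heq), Heq.
    replace (x t - c * g t - (x t - c * g t)) with 0 by ring. rewrite Rabs_R0.
    pose proof (Rabs_pos (g t - g t)). pose proof (Rabs_pos (F - c)). nra.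
  - assert (Hzt0 : 0 < Rabs (z - t)) by (apply Rabs_pos_lt; intro; apply Hne; f_equal; lra).
    specialize (Hd z Hz (conj Hzt0 Hzt) Hne).
    set (q := (x z - x t) / (g z - g t)) in Hd.
    replace (x z - c * g z - (x t - c * g t)) with ((q - c) * (g z - g t))
      by (unfold q; field; lra).
    rewrite Rabs_mult. apply Rmult_le_compat_r; [apply Rabs_pos|].
    replace (q - c) with ((q - F) + (F - c)) by ring.
    pose proof (Rabs_triang (q - F) (F - c)). lra.
Qed.

(** * The local truncation error *)

Lemma C1_bounded_pos phi K : C1_bounded phi K -> 0 < K.
Proof. intros [d [_ [_ Hb]]]. pose proof (Hb 0). pose proof (Rabs_pos (d 0)). lra. Qed.

Lemma C1_bounded_lipschitz phi K :
  C1_bounded phi K -> forall y z, Rabs (phi y - phi z) <= K * Rabs (y - z).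
Proof.
  intros HC y z. pose proof (C1_bounded_pos phi K HC) as HK.
  destruct HC as [d [Hd [_ Hb]]].
  assert (Hmvt : forall u v, u < v -> Rabs (phi v - phi u) <= K * Rabs (v - u)).
  { intros u v Huv. destruct (MVT_cor2 phi d u v Huv (fun c _ => Hd c)) as [c [Hc _]].
    rewrite Hc, Rabs_mult. specialize (Hb c). pose proof (Rabs_pos (v - u)). nra. }
  destruct (Rtotal_order y z) as [Hlt | [-> | Hgt]].
  - rewrite Rabs_minus_sym, (Rabs_minus_sym y). now apply Hmvt.
  - rewrite !Rminus_diag, Rabs_R0. lra.
  - now apply Hmvt.
Qed.

Lemma solution_increment_bound T g Dg f x E a b xa ga c M :
  0 <= a -> a < b -> b <= T -> increasing_on T g ->
  (forall t, 0 < t <= T -> left_cont_at g t) -> g_abs_cont T g x -> g_null T g E ->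
  (forall t, 0 <= t < T -> ~ E t -> g_deriv T g Dg x t (f t (x t))) ->
  (forall d, In d Dg -> ~ (a < d < b)) ->
  rlim T x a xa -> rlim T g a ga ->
  (forall t, a < t < b -> Rabs (f t (x t) - c) <= M) ->
  Rabs (x b - xa - c * (g b - ga)) <= M * (g b - ga).
Proof.
  intros Ha Hab HbT Hg Hlc HAC Hnull Hder Hnd Hxa Hga HFc.
  assert (HM : 0 <= M).
  { set (m := (a + b) / 2). pose proof (HFc m ltac:(unfold m; lra)).
    pose proof (Rabs_pos (f m (x m) - c)). lra. }
  replace (x b - xa - c * (g b - ga)) with ((x b - c * g b) - (xa - c * ga)) by ring.
  apply (g_mean_value_ineq_rlim T g (fun t => x t - c * g t) E a b); auto.
  - now apply g_abs_cont_sub_scal.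
  - intros t Ht HnE.
    apply (g_slope_le_of_quotient T g x t (f t (x t))); [exact HAC | lra | apply HFc; lra |].
    apply (Hder t ltac:(lra) HnE). intro Hin. apply (Hnd t Hin). lra.
  - now apply rlim_sub_scal.
Qed.

(* Read X = x(t_(k+1)) - x_k^+, D = g(t_(k+1)) - g(t_k^+), P = f(t_k^+, x_k^+),
   Fb = f(t_(k+1), x_(k+1)) and Fs = f(t_(k+1), x*_(k+1)). *)
Lemma trapezoid_error_bound H K h D X P Fb Fs :
  0 <= H * h -> 0 <= K -> 0 <= D <= H * h ->
  Rabs (X - / 2 * (P + Fb) * D) <= / 2 * (H * h) * D ->
  Rabs (X - P * D) <= H * h * D ->
  Rabs (Fb - Fs) <= K * Rabs (X - P * D) ->
  Rabs (X - / 2 * (P + Fs) * D) <= / 2 * H ^ 2 * h ^ 2 + / 2 * K * H ^ 3 * h ^ 3.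
Proof.
  intros HHh HK HD Htrap Hpred Hcorr.
  assert (HFs : Rabs (Fb - Fs) <= K * (H * h * D)).
  { eapply Rle_trans; [exact Hcorr|]. now apply Rmult_le_compat_l. }
  replace (X - / 2 * (P + Fs) * D) with ((X - / 2 * (P + Fb) * D) + / 2 * (Fb - Fs) * D) by ring.
  apply Rabs_le_inv in Htrap. apply Rabs_le_inv in HFs.
  assert (Hq1 : / 2 * (H * h) * D <= / 2 * H ^ 2 * h ^ 2) by (simpl; nra).
  assert (Hq2 : K * (H * h * D) * D <= K * H ^ 3 * h ^ 3).
  { assert (Hsq : D * D <= (H * h) * (H * h)) by nra.
    assert (H * h * (D * D) <= H * h * ((H * h) * (H * h))) by (apply Rmult_le_compat_l; lra).
    assert (0 <= H * h * D) by nra.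
    simpl. nra. }
  assert (- (K * (H * h * D) * D) <= (Fb - Fs) * D <= K * (H * h * D) * D) by (split; nra).
  apply Rabs_le. lra.
Qed.

Lemma tau_step_bound T g Dg (f fplus : R -> R -> R) x xp gp Fp H K2 a h :
  increasing_on T g -> (forall t, 0 < t <= T -> left_cont_at g t) -> g_abs_cont T g x ->
  (exists E : R -> Prop, g_null T g E /\
     forall t, 0 <= t < T -> ~ E t -> g_deriv T g Dg x t (f t (x t))) ->
  rlim T x a (xp a) -> rlim T g a (gp a) -> 0 < H ->
  Lipschitz_on T (fun t => f t (x t) - jump_sum Dg (fun s => f s (x s)) Fp t) H ->
  Lipschitz_on T (fun t => g t - jump_sum Dg g gp t) H ->
  (forall t, 0 <= t <= T -> C1_bounded (f t) K2) ->
  rlim T (fun s => f s (xp a)) a (fplus a (xp a)) ->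
  0 <= a -> 0 < h -> a + h <= T -> (forall d, In d Dg -> ~ (a < d < a + h)) ->
  Rabs (tau x g f xp gp fplus a (a + h)) <= / 2 * H ^ 2 * h ^ 2 + / 2 * K2 * H ^ 3 * h ^ 3.
Proof.
  intros Hg Hlc HAC [E [Hnull Hder]] Hxa Hga HH HLF HLg HC1 Hfa Ha Hh HbT Hnd.
  set (b := a + h) in *. assert (Hb : b = a + h) by reflexivity.
  assert (HK2 : 0 < K2) by (apply (C1_bounded_pos (f a)), HC1; lra).
  set (P := fplus a (xp a)). set (D := g b - gp a). set (Fb := f b (x b)).
  assert (Hflip : forall t t', a < t <= b -> a < t' <= b ->
                   Rabs (f t' (x t') - f t (x t)) <= H * Rabs (t' - t))
    by (apply (lipschitz_between_jumps T Dg _ Fp H a b); auto).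
  assert (HfP : forall t, a < t <= b -> Rabs (f t (x t) - P) <= H * (t - a)).
  { intros t Ht.
    apply (rlim_lipschitz_bound T (fun t => f t (x t)) a b);
      [lra | exact HbT | | exact Hflip | exact Ht].
    apply (rlim_compose_lipschitz T f x a (xp a) P K2); [lra | exact Hxa | exact Hfa |].
    intros s y z Hs. apply C1_bounded_lipschitz, HC1. lra. }
  assert (HD : 0 <= D <= H * h).
  { assert (Hgb : g a <= gp a <= g b).
    { apply (rlim_between T g a b); auto; try lra. intros s Hs. split; apply Hg; lra. }
    assert (Hlip : Rabs (g b - gp a) <= H * (b - a)).
    { apply (rlim_lipschitz_bound T g a b); auto; try lra.
      apply (lipschitz_between_jumps T Dg g gp H a b); auto. }
    replace (b - a) with h in Hlip by lra. apply Rabs_le_inv in Hlip. unfold D. lra. }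
  assert (Hpred : Rabs (x b - xp a - P * D) <= H * h * D).
  { apply (solution_increment_bound T g Dg f x E a b); auto; try lra.
    intros t Ht. eapply Rle_trans; [apply HfP; lra|]. apply Rmult_le_compat_l; lra. }
  assert (Htrap : Rabs (x b - xp a - / 2 * (P + Fb) * D) <= / 2 * (H * h) * D).
  { apply (solution_increment_bound T g Dg f x E a b); auto; try lra.
    intros t Ht. pose proof (HfP t ltac:(lra)) as Q1.
    pose proof (Hflip t b ltac:(lra) ltac:(lra)) as Q2. fold Fb in Q2.
    rewrite (Rabs_pos_eq (b - t)) in Q2 by lra.
    apply Rabs_le_inv in Q1. apply Rabs_le_inv in Q2.
    apply Rabs_le. split; nra. }
  unfold tau, xstar. fold P D.
  apply (trapezoid_error_bound H K2 h D (x b - xp a) P Fb); try nra; auto.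
  replace (x b - xp a - P * D) with (x b - (xp a + P * D)) by ring.
  apply C1_bounded_lipschitz, HC1. lra.
Qed.

Lemma no_grid_point_between h n k : 0 < h -> ~ (INR n * h < INR k * h < INR n * h + h).
Proof.
  intros Hh [H1 H2].
  apply Rmult_lt_reg_r in H1; [|exact Hh]. apply INR_lt in H1.
  replace (INR n * h + h) with (INR (S n) * h) in H2 by (rewrite S_INR; ring).
  apply Rmult_lt_reg_r in H2; [|exact Hh]. apply INR_lt in H2. lia.
Qed.

Lemma grid_step_in_range T N n :
  0 < T -> (n <= N)%nat ->
  0 <= INR n * (T / INR (S N)) /\ INR n * (T / INR (S N)) + T / INR (S N) <= T.
Proof.
  intros HT Hn.
  assert (HSN : 0 < INR (S N)) by (apply lt_0_INR; lia).
  assert (Hh : 0 < T / INR (S N)) by (apply Rdiv_lt_0_compat; lra).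
  split; [pose proof (pos_INR n); nra|].
  replace (INR n * (T / INR (S N)) + T / INR (S N)) with (INR (S n) * (T / INR (S N)))
    by (rewrite S_INR; ring).
  apply Rle_trans with (INR (S N) * (T / INR (S N))); [|right; field; lra].
  apply Rmult_le_compat_r; [lra | apply le_INR; lia].
Qed.

Lemma linear_quadratic_vanishes A B eps :
  0 <= A -> 0 <= B -> 0 < eps ->
  exists del, 0 < del /\ forall h, 0 < h -> h < del -> A * h + B * h ^ 2 < eps.
Proof.
  intros HA HB Heps. exists (Rmin 1 (eps / (A + B + 1))).
  split; [apply Rmin_pos; [lra | apply Rdiv_lt_0_compat; lra]|].
  intros h Hh Hdel.
  pose proof (Rmin_l 1 (eps / (A + B + 1))). pose proof (Rmin_r 1 (eps / (A + B + 1))).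
  assert (Hh2 : B * h ^ 2 <= B * h) by (apply Rmult_le_compat_l; [lra | simpl; nra]).
  assert ((A + B + 1) * h < (A + B + 1) * (eps / (A + B + 1))) by (apply Rmult_lt_compat_l; lra).
  replace ((A + B + 1) * (eps / (A + B + 1))) with eps in H1 by (field; lra).
  nra.
Qed.

Theorem mainTheorem9
  (T : R) (g : R -> R) (Dg : list R) (f fplus : R -> R -> R) (x0 : R) (x : R -> R)
  (xp gp Fp : R -> R) (H K2 K3 : R) :
  0 < T ->
  (forall t, 0 <= t <= T -> 0 <= g t) ->
  increasing_on T g ->
  (forall t, 0 < t <= T -> left_cont_at g t) ->
  cont_in T g 0 ->
  NoDup Dg ->
  (forall d, In d Dg -> 0 < d < T) ->
  (forall t, 0 <= t <= T -> (In t Dg <-> ~ cont_in T g t)) ->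
  x 0 = x0 ->
  g_abs_cont T g x ->
  (exists E : R -> Prop, g_null T g E /\
     forall t, 0 <= t < T -> ~ E t -> g_deriv T g Dg x t (f t (x t))) ->
  (forall t, 0 <= t < T -> rlim T x t (xp t)) ->
  (forall t, 0 <= t < T -> rlim T g t (gp t)) ->
  (forall t, 0 <= t < T -> rlim T (fun s => f s (x s)) t (Fp t)) ->
  0 < H ->
  g_Lipschitz T g (fun s => f s (x s)) H ->
  Lipschitz_on T (fun t => f t (x t) - jump_sum Dg (fun s => f s (x s)) Fp t) H ->
  Lipschitz_on T (fun t => g t - jump_sum Dg g gp t) H ->
  (forall c, (exists M, forall t, 0 <= t <= T -> Rabs (f t c) <= M) /\
             g_cont T g (fun t => f t c)) ->
  (forall t, 0 <= t <= T -> C1_bounded (f t) K2) ->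
  (forall t c, 0 <= t < T -> rlim T (fun s => f s c) t (fplus t c)) ->
  (forall t, 0 <= t < T -> C1_bounded (fplus t) K3) ->
  (forall N : nat,
     let h := T / INR (S N) in
     (forall d, In d Dg -> exists k : nat, (k <= S N)%nat /\ d = INR k * h) ->
     forall n : nat, (n <= N)%nat ->
       Rabs (tau x g f xp gp fplus (INR n * h) (INR (S n) * h)) / h
         <= / 2 * H ^ 2 * h + / 2 * K2 * H ^ 3 * h ^ 2)
  /\
  (forall eps, 0 < eps -> exists del, 0 < del /\
     forall N : nat,
       let h := T / INR (S N) in
       h < del ->
       (forall d, In d Dg -> exists k : nat, (k <= S N)%nat /\ d = INR k * h) ->
       forall n : nat, (n <= N)%nat ->
         Rabs (tau x g f xp gp fplus (INR n * h) (INR (S n) * h)) / h < eps).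
Proof.
  intros HT _ Hg Hlc _ _ _ _ _ HAC Hae Hx Hgp _ HH _ HLF HLg _ HC1 Hfp _.
  assert (HK2 : 0 < K2) by (apply (C1_bounded_pos (f 0)), HC1; lra).
  assert (Hstep_pos : forall N : nat, 0 < T / INR (S N))
    by (intro N; apply Rdiv_lt_0_compat; [lra | apply lt_0_INR; lia]).
  assert (Hbound : forall N : nat,
     let h := T / INR (S N) in
     (forall d, In d Dg -> exists k : nat, (k <= S N)%nat /\ d = INR k * h) ->
     forall n : nat, (n <= N)%nat ->
       Rabs (tau x g f xp gp fplus (INR n * h) (INR (S n) * h)) / h
         <= / 2 * H ^ 2 * h + / 2 * K2 * H ^ 3 * h ^ 2).
  { intros N h Hnodes n Hn. pose proof (Hstep_pos N) as Hh. fold h in Hh.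
    destruct (grid_step_in_range T N n HT Hn) as [Ha Hend]. fold h in Ha, Hend.
    replace (INR (S n) * h) with (INR n * h + h) by (rewrite S_INR; ring).
    replace (/ 2 * H ^ 2 * h + / 2 * K2 * H ^ 3 * h ^ 2)
      with ((/ 2 * H ^ 2 * h ^ 2 + / 2 * K2 * H ^ 3 * h ^ 3) / h) by (field; lra).
    apply Rmult_le_compat_r; [left; apply Rinv_0_lt_compat, Hh|].
    apply (tau_step_bound T g Dg f fplus x xp gp Fp H K2); auto; try lra.
    - apply Hx. lra.
    - apply Hgp. lra.
    - apply Hfp. lra.
    - intros d Hd. destruct (Hnodes d Hd) as [k [_ ->]]. now apply no_grid_point_between. }
  split; [exact Hbound|].
  intros eps Heps.
  destruct (linear_quadratic_vanishes (/ 2 * H ^ 2) (/ 2 * K2 * H ^ 3) eps) as [del [Hdel Hsmall]];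
    auto; try (pose proof (pow_lt H 2 HH); pose proof (pow_lt H 3 HH); nra).
  exists del. split; [exact Hdel|].
  intros N h Hh Hnodes n Hn.
  eapply Rle_lt_trans; [exact (Hbound N Hnodes n Hn)|]. apply Hsmall; [apply Hstep_pos | exact Hh].
Qed.
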